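(* Let $f\in\mathcal{A}_{d,n}$, $b\in\mathcal{A}_{d,m}$, $a\in\mathcal{A}_{e,n+m}$, and let $\sigma$ be a split of $[n+m]$ for which $b\cdot_\sigma f$ is defined (i.e. $\sigma$ consists of an $m$-element subset and its $n$-element complement). Then there exist finitely many $g_1,\dots,g_s\in\mathcal{A}_{e,n}$ and $h_1,\dots,h_s\in\mathcal{A}_{d+e,m}$ such that $a*(b\cdot_\sigma f)=\sum_{i=1}^s h_i\cdot_\sigma(g_i*f)$.
   Context: Let $\mathbf{k}$ be a commutative noetherian ring, $r$ a positive integer, and $\mathcal{A}=\bigoplus_{n,d\ge0}\mathcal{A}_{d,n}$ with $\mathcal{A}_{d,n}=(\mathrm{Sym}^d\mathbf{k}^r)^{\otimes n}$. A split $\sigma$ of $[p+q]$ is a subset $\{i_1<\cdots<i_p\}\subseteq[p+q]$ together with its complement $\{j_1<\cdots<j_q\}$; the shuffle product $\cdot_\sigma:\mathcal{A}_{d,p}\otimes\mathcal{A}_{d,q}\to\mathcal{A}_{d,p+q}$ is $(u_1\otimes\cdots\otimes u_p)\cdot_\sigma(v_1\otimes\cdots\otimes v_q)=w_1\otimes\cdots\otimes w_{p+q}$ with $w_{i_k}=u_k$, $w_{j_k}=v_k$, extended bilinearly. The product $*:\mathcal{A}_{d,n}\otimes\mathcal{A}_{e,n}\to\mathcal{A}_{d+e,n}$ is $(u_1\otimes\cdots\otimes u_n)*(v_1\otimes\cdots\otimes v_n)=u_1v_1\otimes\cdots\otimes u_nv_n$. *)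

From HB Require Import structures.
From mathcomp Require Import all_boot all_order all_algebra.
From mathcomp Require Export mpoly.
Set Implicit Arguments. Unset Strict Implicit. Unset Printing Implicit Defensive.
Import Order.TTheory GRing.Theory Num.Theory.
Local Open Scope ring_scope.

Definition is_ideal (R : comNzRingType) (I : R -> Prop) : Prop :=
  [/\ I 0, (forall x y, I x -> I y -> I (x + y)) & (forall c x, I x -> I (c * x))].

Definition noetherian (R : comNzRingType) : Prop :=
  forall I : R -> Prop, is_ideal I ->
    exists s : seq R, forall x, I x <-> exists c : 'I_(size s) -> R,
      x = \sum_(t < size s) c t * s`_t.

(* (Sym k^r)^{(x) n} = k[x_1..x_r]^{(x) n} is identified with the polynomial
   ring k[x_{i,j} | i < n, j < r] = {mpoly R[n * r]}; the variable x_{i,j}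
   (j-th variable of the i-th tensor factor) has index [var_of i j]. *)
Definition var_of (n r : nat) (i : 'I_n) (j : 'I_r) : 'I_(n * r) :=
  mxvec_index i j.

Definition blk (n r : nat) (k : 'I_(n * r)) : 'I_n * 'I_r :=
  enum_val (cast_ord (esym (mxvec_cast n r)) k).

(* A_{d,n} = (Sym^d k^r)^{(x) n}: polynomials homogeneous of degree d in each
   block of variables {x_{i,j} | j < r}. *)
Definition inA (R : comNzRingType) (r d n : nat) (u : {mpoly R[n * r]}) : Prop :=
  forall mm, mm \in msupp u -> forall i : 'I_n, (\sum_(j < r) mm (var_of i j))%N = d.

(* Placing tensor factor a (of p factors) at position phi a (of N factors). *)
Definition rename (R : comNzRingType) (r p N : nat) (phi : 'I_p -> 'I_N)
  (u : {mpoly R[p * r]}) : {mpoly R[N * r]} :=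
  mmap (fun c : R => c%:MP_[N * r])
       (fun k : 'I_(p * r) => 'X_(var_of (phi (blk k).1) (blk k).2)) u.

(* A split sigma of [p+q]: the increasing enumeration i_1<..<i_p of a p-subset
   and the increasing enumeration j_1<..<j_q of its complement. *)
Definition is_split (p q : nat) (si : 'I_p -> 'I_(p + q)) (sj : 'I_q -> 'I_(p + q)) : Prop :=
  [/\ {homo si : x y / (x < y)%N}, {homo sj : x y / (x < y)%N},
      (forall x y, si x <> sj y) &
      (forall k, (exists x, si x = k) \/ (exists y, sj y = k))].

(* Shuffle product u ._sigma v (u has p factors, v has q factors); on pure
   tensors (u_1..u_p) ._sigma (v_1..v_q) = w with w_{i_k}=u_k, w_{j_k}=v_k. *)
Definition shuffle (R : comNzRingType) (r p q : nat)
  (si : 'I_p -> 'I_(p + q)) (sj : 'I_q -> 'I_(p + q))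
  (u : {mpoly R[p * r]}) (v : {mpoly R[q * r]}) : {mpoly R[(p + q) * r]} :=
  rename si u * rename sj v.

(* The product * : A_{d,n} (x) A_{e,n} -> A_{d+e,n} is the product of
   polynomials in {mpoly R[n * r]} (factorwise multiplication). *)
Arguments inA {R} r d {n} u.

From HB Require Import structures.
From mathcomp Require Import all_boot all_order all_algebra.
From mathcomp Require Import mpoly.
Import GRing.Theory.
Local Open Scope ring_scope.

(* Expand [a] into terms [c *: X^mm].  Every monomial [X^mm] of [(m + n) r]
   variables is the shuffle of its restrictions to the blocks [si] and [sj],
   and shuffling is multiplicative in both arguments, so
   [c X^mm * (b ._sigma f) = (c X^mm|si * b) ._sigma (X^mm|sj * f)].
   Restricting a monomial of [a] to some blocks keeps it of degree [e] in each
   block, whence the degrees of [g] and [h].  No hypothesis on the ring is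
   needed: the identity holds over any commutative ring and for every [r]. *)

Lemma blk_var_of (n r : nat) (i : 'I_n) (j : 'I_r) : blk (var_of i j) = (i, j).
Proof. by rewrite /blk /var_of /mxvec_index cast_ordK enum_rankK. Qed.

Lemma var_of_blk (n r : nat) (k : 'I_(n * r)) : var_of (blk k).1 (blk k).2 = k.
Proof. by rewrite /blk /var_of /mxvec_index -surjective_pairing enum_valK cast_ordKV. Qed.

Lemma big_var_of (T : Type) (idx : T) (op : Monoid.com_law idx) (N r : nat)
    (F : 'I_(N * r) -> T) :
  \big[op/idx]_k F k = \big[op/idx]_(i < N) \big[op/idx]_(j < r) F (var_of i j).
Proof.
rewrite pair_big /= (reindex (fun p : 'I_N * 'I_r => var_of p.1 p.2)) //.
exists (@blk N r) => [[i j] _ | k _]; first by rewrite blk_var_of.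
exact: var_of_blk.
Qed.

Lemma ltn_homo_inj (k l : nat) (s : 'I_k -> 'I_l) :
  {homo s : x y / (x < y)%N} -> injective s.
Proof.
move=> hs x y sxy; apply/val_inj/eqP.
by case: (ltngtP x y) => // /hs; rewrite sxy ltnn.
Qed.

Lemma big_split_ord (T : Type) (idx : T) (op : Monoid.com_law idx) (p q : nat)
    (si : 'I_p -> 'I_(p + q)) (sj : 'I_q -> 'I_(p + q)) (F : 'I_(p + q) -> T) :
  injective si -> injective sj -> (forall x y, si x <> sj y) ->
  \big[op/idx]_k F k = op (\big[op/idx]_x F (si x)) (\big[op/idx]_y F (sj y)).
Proof.
move=> si_inj sj_inj si_sj.
pose h (z : 'I_p + 'I_q) := match z with inl x => si x | inr y => sj y end.
have h_inj : injective h.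
  case=> [x|y] [x'|y'] //= hzz'; first by rewrite (si_inj _ _ hzz').
  - by case: (si_sj _ _ hzz').
  - by case: (si_sj _ _ (esym hzz')).
  - by rewrite (sj_inj _ _ hzz').
have h_bij : bijective h by apply: inj_card_bij; rewrite // card_sum !card_ord.
by rewrite (reindex h) ?big_sumType //; apply: onW_bij.
Qed.

Section Rename.

Variables (R : comNzRingType) (r p N : nat) (phi : 'I_p -> 'I_N).

Lemma renameM (u v : {mpoly R[p * r]}) :
  rename phi (u * v) = rename phi u * rename phi v.
Proof. exact: (mmap_is_multiplicative _ (@mpolyC (N * r) R)).1. Qed.

Lemma renameC (c : R) : rename (r := r) phi c%:MP = c%:MP.
Proof. exact: mmapC. Qed.

Definition mrestrict (mm : 'X_{1..N * r}) : 'X_{1..p * r} :=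
  [multinom mm (var_of (phi (blk k).1) (blk k).2) | k < p * r].

Lemma rename_mrestrictX (mm : 'X_{1..N * r}) :
  rename phi 'X_[mrestrict mm] =
  \prod_(x < p) \prod_(j < r) 'X_(var_of (phi x) j) ^+ mm (var_of (phi x) j)
  :> {mpoly R[N * r]}.
Proof.
rewrite /rename mmapX /mmap1 big_var_of; apply: eq_bigr => x _; apply: eq_bigr => j _.
by rewrite mnmE blk_var_of.
Qed.

Lemma inA_mrestrictX (e : nat) (a : {mpoly R[N * r]}) (mm : 'X_{1..N * r}) :
  inA r e a -> mm \in msupp a -> inA r e ('X_[mrestrict mm] : {mpoly R[p * r]}).
Proof.
move=> ha mm_a mm'; rewrite msuppX mem_seq1 => /eqP -> x.
by rewrite -(ha _ mm_a (phi x)); apply: eq_bigr => j _; rewrite mnmE blk_var_of.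
Qed.

End Rename.

Arguments mrestrict {r p N} phi mm.

Section Shuffle.

Variables (R : comNzRingType) (r p q : nat).
Variables (si : 'I_p -> 'I_(p + q)) (sj : 'I_q -> 'I_(p + q)).

Lemma shuffleM (u u' : {mpoly R[p * r]}) (v v' : {mpoly R[q * r]}) :
  shuffle si sj (u * u') (v * v') = shuffle si sj u v * shuffle si sj u' v'.
Proof. by rewrite /shuffle !renameM mulrACA. Qed.

Lemma shuffleZl (c : R) (u : {mpoly R[p * r]}) (v : {mpoly R[q * r]}) :
  shuffle si sj (c *: u) v = c *: shuffle si sj u v.
Proof. by rewrite /shuffle -!mul_mpolyC renameM renameC mulrA. Qed.

Lemma shuffle_mrestrictX (mm : 'X_{1..(p + q) * r}) : is_split si sj ->
  'X_[mm] = shuffle si sj 'X_[mrestrict si mm] 'X_[mrestrict sj mm]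
  :> {mpoly R[(p + q) * r]}.
Proof.
case=> si_homo sj_homo si_sj _.
rewrite /shuffle !rename_mrestrictX mpolyXE_id big_var_of.
by apply: big_split_ord => //; apply: ltn_homo_inj.
Qed.

End Shuffle.

Arguments shuffle_mrestrictX {R r p q si sj} mm.

Lemma inAM (R : comNzRingType) (r N d e : nat) (u v : {mpoly R[N * r]}) :
  inA r d u -> inA r e v -> inA r (d + e) (u * v).
Proof.
move=> hu hv mm /msuppM_le /allpairsP [[mu mv] /= [mu_u mv_v ->]] i.
under eq_bigr do rewrite mnmDE.
by rewrite big_split /= (hu _ mu_u) (hv _ mv_v).
Qed.

Lemma inAZ (R : comNzRingType) (r N d : nat) (c : R) (u : {mpoly R[N * r]}) :
  inA r d u -> inA r d (c *: u).
Proof. by move=> hu mm /msuppZ_le; apply: hu. Qed.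

Lemma mpolyE_ord (R : comNzRingType) (N : nat) (a : {mpoly R[N]}) :
  a = \sum_(t < size (msupp a))
        a@_(nth 0%MM (msupp a) t) *: 'X_[nth 0%MM (msupp a) t].
Proof. by rewrite {1}[a]mpolyE (big_nth 0%MM) big_mkord. Qed.

Theorem lemma2p1 (R : comNzRingType) (hR : noetherian R) (r : nat) (hr : (0 < r)%N)
  (d e n m : nat)
  (f : {mpoly R[n * r]}) (b : {mpoly R[m * r]}) (a : {mpoly R[(m + n) * r]})
  (si : 'I_m -> 'I_(m + n)) (sj : 'I_n -> 'I_(m + n)) :
  inA r d f -> inA r d b -> inA r e a -> is_split si sj ->
  exists (s : nat) (g : 'I_s -> {mpoly R[n * r]}) (h : 'I_s -> {mpoly R[m * r]}),
    (forall t, inA r e (g t) /\ inA r (d + e) (h t)) /\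
    a * shuffle si sj b f = \sum_(t < s) shuffle si sj (h t) (g t * f).
Proof.
move=> hf hb ha hsplit.
pose mm (t : 'I_(size (msupp a))) := nth 0%MM (msupp a) t.
have mm_a t : mm t \in msupp a by rewrite mem_nth.
exists (size (msupp a)), (fun t => 'X_[mrestrict sj (mm t)]),
  (fun t => a@_(mm t) *: 'X_[mrestrict si (mm t)] * b).
split=> [t|].
  split; first exact: inA_mrestrictX ha (mm_a t).
  rewrite addnC; apply: inAM hb; apply: inAZ; exact: inA_mrestrictX ha (mm_a t).
rewrite {1}[a]mpolyE_ord mulr_suml; apply: eq_bigr => t _.
by rewrite shuffleM shuffleZl -(shuffle_mrestrictX _ hsplit).
Qed.
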